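(* For every $n\ge 3$, $\beta(P_\infty\,\Box\, C_n)=2$ if $n$ is odd and $\beta(P_\infty\,\Box\, C_n)=3$ if $n$ is even. Moreover, $\{(0,0),(0,\tfrac{n-1}{2})\}$ is a metric basis of $P_\infty\,\Box\, C_n$ when $n$ is odd, and $\{(0,0),(0,\tfrac n2),(0,1)\}$ is a metric basis when $n$ is even.
   Context: $P_\infty$ has vertex set $\mathbb N=\{0,1,2,\dots\}$ with $i,j$ adjacent iff $|i-j|=1$. $C_n$ has vertex set $\{0,1,\dots,n-1\}$, with $0\le i\le j\le n-1$ adjacent iff $j-i=1$ or $j-i=n-1$. The cartesian product $G\Box H$ has vertex set $V(G)\times V(H)$, where $(a,v)$ is adjacent to $(b,w)$ iff either $a=b$ and $vw\in E(H)$, or $v=w$ and $ab\in E(G)$. A vertex $x$ resolves $u,v$ if $d(u,x)\ne d(v,x)$ (shortest-path distance); a resolving set is a set of vertices resolving every pair of distinct vertices; $\beta$ is the minimum cardinality of a resolving set ($\infty$ if none is finite), and a metric basis is a resolving set of cardinality $\beta$. *)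

From mathcomp Require Import all_boot.
Set Implicit Arguments. Unset Strict Implicit. Unset Printing Implicit Defensive.

Inductive walk {V : Type} (adj : V -> V -> Prop) : V -> V -> nat -> Prop :=
| walk0 x : walk adj x x 0
| walkS x y z k : adj x y -> walk adj y z k -> walk adj x z k.+1.

Definition graph_dist {V : Type} (adj : V -> V -> Prop) (u v : V) (d : nat) : Prop :=
  walk adj u v d /\ forall k, walk adj u v k -> d <= k.

Definition resolves {V : Type} (adj : V -> V -> Prop) (x u v : V) : Prop :=
  exists du dv, graph_dist adj u x du /\ graph_dist adj v x dv /\ du <> dv.

Definition resolving_set {V : eqType} (adj : V -> V -> Prop) (S : seq V) : Prop :=
  forall u v : V, u <> v -> exists x, x \in S /\ resolves adj x u v.

Definition metric_basis {V : eqType} (adj : V -> V -> Prop) (B : seq V) : Prop :=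
  uniq B /\ resolving_set adj B /\
  forall S : seq V, uniq S -> resolving_set adj S -> size B <= size S.

Definition metric_dim_eq {V : eqType} (adj : V -> V -> Prop) (m : nat) : Prop :=
  exists B, metric_basis adj B /\ size B = m.

Definition adjP (i j : nat) : Prop := i.+1 = j \/ j.+1 = i.

Definition adjC (n : nat) (i j : 'I_n) : Prop :=
  let d := if (i <= j)%N then (j - i)%N else (i - j)%N in d = 1 \/ d = n - 1.

Definition box {A B : Type} (adjA : A -> A -> Prop) (adjB : B -> B -> Prop)
  (x y : A * B) : Prop :=
  (x.1 = y.1 /\ adjB x.2 y.2) \/ (x.2 = y.2 /\ adjA x.1 y.1).

Definition PinfBoxC (n : nat) : nat * 'I_n -> nat * 'I_n -> Prop := box adjP (@adjC n).

Lemma lt0_3 n : 2 < n -> 0 < n.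
Proof. by move=> h; apply: leq_trans h. Qed.
Lemma lt1_3 n : 2 < n -> 1 < n.
Proof. by move=> h; apply: ltnW. Qed.
Lemma lthalf_3 n : 2 < n -> n %/ 2 < n.
Proof. by move=> h; rewrite ltn_Pdiv // (lt0_3 h). Qed.
Lemma lthalfm1_3 n : 2 < n -> (n - 1) %/ 2 < n.
Proof. by move=> h; apply: leq_ltn_trans (leq_div _ _) _; rewrite ltn_subrL (lt0_3 h). Qed.

(* The proof computes the graph distance explicitly: d((a,i),(b,j)) is
   |a - b| + cdist n i j, where cdist n i j = min(|i - j|, n - |i - j|) is the
   distance in the cycle C_n.  A general criterion (section DistanceFunction)
   identifies a function D with the graph distance as soon as D vanishes on
   the diagonal, grows by at most one along an edge and is realised by walks;
   resolving sets are then characterised purely in terms of D.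

   Seen from a landmark (0, k) on the bottom layer, a vertex (a, i) is at
   distance a + cdist n i k.  For n = 2m+1 the two values at k = 0 and k = m
   determine (a, i); for n = 2m this needs the three landmarks 0, m and 1.
   Conversely no single vertex resolves the graph (go one layer up versus one
   step along the cycle), and for even n no two vertices do (step away from
   the second landmark, or use the two cycle neighbours of an antipodal
   pair).  These facts, together with a padding argument turning "no set of
   size m resolves" into a lower bound, give the theorem. *)

From mathcomp Require Import all_boot zify.

Set Implicit Arguments.
Unset Strict Implicit.
Unset Printing Implicit Defensive.

Section Walks.
Variables (V : Type) (adj : V -> V -> Prop).

Lemma walk_cat x y z k l : walk adj x y k -> walk adj y z l -> walk adj x z (k + l).
Proof. by elim=> [//|x0 y0 z0 k0 xy _ IH] /IH; rewrite addSn; apply: walkS. Qed.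

Hypothesis adj_sym : forall x y, adj x y -> adj y x.

Lemma walk_rev x y k : walk adj x y k -> walk adj y x k.
Proof.
elim=> [x0|x0 y0 z0 k0 xy _ IH]; first exact: walk0.
by rewrite -addn1; apply: walk_cat IH (walkS (adj_sym xy) (walk0 _ _)).
Qed.

End Walks.

Section DistanceFunction.
Variables (V : eqType) (adj : V -> V -> Prop) (D : V -> V -> nat).
Hypothesis D_refl : forall x, D x x = 0.
Hypothesis D_step : forall x y z, adj x y -> D x z <= (D y z).+1.
Hypothesis D_walk : forall u v, walk adj u v (D u v).

Lemma walk_length_ge u v k : walk adj u v k -> D u v <= k.
Proof.
elim=> [x|x y z k' xy _ IH]; first by rewrite D_refl.
exact: leq_trans (D_step z xy) _.
Qed.

Lemma graph_distE u v d : graph_dist adj u v d <-> d = D u v.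
Proof.
split=> [[uv_d min_d]|->]; last by split=> [|k]; [exact: D_walk|exact: walk_length_ge].
by apply/eqP; rewrite eqn_leq min_d ?walk_length_ge.
Qed.

Lemma resolvesE x u v : resolves adj x u v <-> D u x <> D v x.
Proof.
split=> [[du [dv [/graph_distE-> [/graph_distE-> //]]]]|neq].
by exists (D u x), (D v x); rewrite !graph_distE.
Qed.

Lemma resolving_setE S :
  resolving_set adj S <-> forall u v, (forall x, x \in S -> D u x = D v x) -> u = v.
Proof.
split=> [res u v same|inj u v neq].
  by case: (eqVneq u v) => // /eqP/res [x [/same eq_x /resolvesE]].
have [/hasP [x xS /eqP neq_x]|/hasPn same] := boolP (has (fun x => D u x != D v x) S).
  by exists x; split=> //; apply/resolvesE.
by case: neq; apply: inj => x /same /negbNE /eqP.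
Qed.

End DistanceFunction.

Section MetricBasis.
Variables (V : eqType) (adj : V -> V -> Prop).

Lemma resolving_set_sub S T : {subset S <= T} -> resolving_set adj S -> resolving_set adj T.
Proof. by move=> ST res u v /res [x [/ST xT resx]]; exists x. Qed.

(* If no list of size m resolves, every resolving list is longer than m:
   a shorter one could be padded (with repetitions) to size m. *)
Lemma resolving_size_gt (x0 : V) m :
  (forall T : seq V, size T = m -> ~ resolving_set adj T) ->
  forall S, resolving_set adj S -> m < size S.
Proof.
move=> small S res; rewrite ltnNge; apply/negP => le_S_m.
apply: (small (S ++ nseq (m - size S) x0)); first by rewrite size_cat size_nseq; lia.
by apply: resolving_set_sub res => x; rewrite mem_cat => ->.
Qed.

Lemma metric_basis_intro B m :
  size B = m -> uniq B -> resolving_set adj B ->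
  (forall S, resolving_set adj S -> m <= size S) ->
  metric_dim_eq adj m /\ metric_basis adj B.
Proof.
move=> <- uB resB minB; have basis : metric_basis adj B.
  by do 2!split=> //; move=> S _ /minB.
by split=> //; exists B.
Qed.

End MetricBasis.

Notation absd i j := ((i - j) + (j - i)).

Definition cdist (n i j : nat) : nat := minn (absd i j) (n - absd i j).

Lemma cdist_near n i j : (absd i j).*2 <= n -> cdist n i j = absd i j.
Proof. rewrite /cdist; lia. Qed.

Lemma cdist_far n i j : n <= (absd i j).*2 -> cdist n i j = n - absd i j.
Proof. rewrite /cdist; lia. Qed.

Ltac cdist_closed :=
  repeat match goal with
  | H : context [cdist ?n ?i ?j] |- _ =>
      first [ rewrite (@cdist_near n i j) in H; last by lia
            | rewrite (@cdist_far n i j) in H; last by lia ]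
  | |- context [cdist ?n ?i ?j] =>
      first [ rewrite (@cdist_near n i j); last by lia
            | rewrite (@cdist_far n i j); last by lia ]
  end.

Lemma cdist_sym n i j : cdist n i j = cdist n j i.
Proof. by rewrite /cdist addnC. Qed.

Lemma cdist_refl n i : cdist n i i = 0.
Proof. rewrite /cdist; lia. Qed.

Lemma cdist_le_half n i j : i < n -> j < n -> (cdist n i j).*2 <= n.
Proof. rewrite /cdist; lia. Qed.

Lemma cdist_step n i j k : i < n -> j < n -> k < n ->
  absd i j = 1 \/ absd i j = n - 1 -> cdist n i k <= (cdist n j k).+1.
Proof. rewrite /cdist; lia. Qed.

Lemma odd_profile_inj n m a b i j : n = m.*2.+1 -> i < n -> j < n ->
  a + cdist n i 0 = b + cdist n j 0 ->
  a + cdist n i m = b + cdist n j m -> a = b /\ i = j.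
Proof.
move=> -> lt_i lt_j e0 em; case: (leqP i m) => ci; case: (leqP j m) => cj.
all: by cdist_closed; lia.
Qed.

Lemma even_profile_inj n m a b i j : n = m.*2 -> 1 < m -> i < n -> j < n ->
  a + cdist n i 0 = b + cdist n j 0 ->
  a + cdist n i m = b + cdist n j m ->
  a + cdist n i 1 = b + cdist n j 1 -> a = b /\ i = j.
Proof.
move=> -> m_gt1 lt_i lt_j e0 em e1.
case: (leqP i m) => ci; case: (leqP j m) => cj; case: (posnP i) => i0; case: (posnP j) => j0.
all: by cdist_closed; lia.
Qed.

Section Grid.
Variable n : nat.
Hypothesis n_gt2 : 2 < n.

Lemma adjCE (i j : 'I_n) : adjC i j <-> absd i j = 1 \/ absd i j = n - 1.
Proof. by rewrite /adjC /=; case: leqP => ?; split; lia. Qed.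

Lemma ordS_val (i : 'I_n) :
  (i.+1 < n /\ val (ordS i) = i.+1) \/ (i.+1 = n /\ val (ordS i) = 0).
Proof.
have := ltn_ord i; rewrite leq_eqVlt => /orP [/eqP eq|lt].
- by right; rewrite /= eq modnn.
- by left; rewrite /= modn_small.
Qed.

Lemma ord_pred_val (i : 'I_n) :
  (0 < i /\ val (ord_pred i) = i.-1) \/ (i = 0 :> nat /\ val (ord_pred i) = n.-1).
Proof.
case: (posnP i) => [i0|i_gt0]; [right|left]; split=> //=.
  by rewrite i0 modn_small //; lia.
have -> : (i + n).-1 = i.-1 + n by lia.
by rewrite modnDr modn_small //; have := ltn_ord i; lia.
Qed.

Lemma cdist_ordS (i : 'I_n) : cdist n (ordS i) i = 1.
Proof. by case: (ordS_val i) => -[? ->]; rewrite /cdist; lia. Qed.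

Lemma cdist_ord_pred (i : 'I_n) : cdist n (ord_pred i) i = 1.
Proof. by case: (ord_pred_val i) => -[? ->]; rewrite /cdist; lia. Qed.

Lemma adjC_ordS (i : 'I_n) : adjC i (ordS i).
Proof. by apply/adjCE; case: (ordS_val i) => -[? ->]; lia. Qed.

Lemma adjC_sym (i j : 'I_n) : adjC i j -> adjC j i.
Proof. by rewrite !adjCE addnC. Qed.

Lemma grid_adj_sym (x y : nat * 'I_n) : PinfBoxC x y -> PinfBoxC y x.
Proof.
rewrite /PinfBoxC /box /adjP => -[[e xy]|[e xy]]; [left|right]; split; rewrite ?e //.
  exact: adjC_sym.
lia.
Qed.

Lemma walk_cycle_forward b k (i j : 'I_n) :
  j = (i + k) %% n :> nat -> walk (@PinfBoxC n) (b, i) (b, j) k.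
Proof.
elim: k i => [|k IH] i ij.
  have -> : j = i by apply: val_inj => /=; rewrite ij addn0 modn_small.
  exact: walk0.
apply: (walkS (y := (b, ordS i))); first by left; split=> //; apply: adjC_ordS.
by apply: IH; rewrite ij /= modnDml addSnnS.
Qed.

Lemma walk_cycle b (i j : 'I_n) : walk (@PinfBoxC n) (b, i) (b, j) (cdist n i j).
Proof.
wlog le_ij : i j / i <= j.
  move=> sym; case: (leqP i j) => [/sym //|/ltnW /sym].
  by rewrite cdist_sym; apply: (walk_rev grid_adj_sym).
have [lt_i lt_j] := (ltn_ord i, ltn_ord j).
case: (leqP (absd i j).*2 n) => [near|far].
  by rewrite cdist_near //; apply: walk_cycle_forward; rewrite modn_small; lia.
rewrite cdist_far; last lia.
apply: (walk_rev grid_adj_sym); apply: walk_cycle_forward.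
have -> : j + (n - absd i j) = i + n by lia.
by rewrite modnDr modn_small.
Qed.

Lemma walk_vertical a k (i : 'I_n) : walk (@PinfBoxC n) (a, i) (a + k, i) k.
Proof.
elim: k a => [|k IH] a; first by rewrite addn0; apply: walk0.
apply: (walkS (y := (a.+1, i))); first by right; split=> //; left.
by rewrite addnS -addSn; apply: IH.
Qed.

Lemma walk_path a b (i : 'I_n) : walk (@PinfBoxC n) (a, i) (b, i) (absd a b).
Proof.
wlog le_ab : a b / a <= b.
  move=> sym; case: (leqP a b) => [/sym //|/ltnW /sym].
  by rewrite addnC; apply: (walk_rev grid_adj_sym).
have -> : absd a b = b - a by lia.
by have := walk_vertical a (b - a) i; rewrite subnKC.
Qed.

Definition gdist (u v : nat * 'I_n) : nat := absd u.1 v.1 + cdist n u.2 v.2.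

Lemma gdist_refl (x : nat * 'I_n) : gdist x x = 0.
Proof. by rewrite /gdist cdist_refl subnn. Qed.

Lemma gdist_step (x y z : nat * 'I_n) : PinfBoxC x y -> gdist x z <= (gdist y z).+1.
Proof.
case: x y z => [a i] [b j] [c k]; rewrite /PinfBoxC /box /adjP /gdist /=.
case=> [[<- /adjCE ij]|[<- ab]]; last by lia.
by have := cdist_step (ltn_ord i) (ltn_ord j) (ltn_ord k) ij; lia.
Qed.

Lemma gdist_walk (u v : nat * 'I_n) : walk (@PinfBoxC n) u v (gdist u v).
Proof.
by case: u v => [a i] [b j]; exact: (walk_cat (walk_path a b i) (walk_cycle b i j)).
Qed.

Lemma resolving_gridE S : resolving_set (@PinfBoxC n) S <->
  forall u v, (forall x, x \in S -> gdist u x = gdist v x) -> u = v.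
Proof. exact: resolving_setE gdist_refl gdist_step gdist_walk S. Qed.

Lemma gdist_landmark a (i k : 'I_n) : gdist (a, i) (0, k) = a + cdist n i k.
Proof. by rewrite /gdist /= subn0 sub0n addn0. Qed.

(* One vertex never resolves: one layer up and one step along the cycle are
   both at the same distance from it. *)
Lemma single_vertex_unresolved (x : nat * 'I_n) :
  exists u v, u <> v /\ gdist u x = gdist v x.
Proof.
case: x => a i; exists (a.+1, i), (a, ordS i); split; first by case; lia.
by rewrite /gdist /= cdist_ordS cdist_refl; lia.
Qed.

Lemma cycle_step_away (i j : 'I_n) : ~~ odd n -> cdist n i j < n./2 ->
  exists p : 'I_n, cdist n p i = 1 /\ cdist n p j = (cdist n i j).+1.
Proof.
move=> even_n near; have [lt_i lt_j] := (ltn_ord i, ltn_ord j).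
have En : n = n./2.*2 by rewrite -[LHS]odd_double_half (negbTE even_n).
suff [away|away] : cdist n (ordS i) j = (cdist n i j).+1 \/
                   cdist n (ord_pred i) j = (cdist n i j).+1.
- by exists (ordS i); rewrite cdist_ordS.
- by exists (ord_pred i); rewrite cdist_ord_pred.
case: (ordS_val i) => -[ci ->]; case: (ord_pred_val i) => -[ci' ->].
all: case: (leqP i j) => cij; case: (leqP (absd i j).*2 n) => side.
all: by cdist_closed; lia.
Qed.

Lemma cycle_antipodal (i j : 'I_n) : ~~ odd n -> cdist n i j = n./2 ->
  ordS i <> ord_pred i /\ cdist n (ordS i) j = cdist n (ord_pred i) j.
Proof.
move=> even_n anti; have [lt_i lt_j] := (ltn_ord i, ltn_ord j).
have En : n = n./2.*2 by rewrite -[LHS]odd_double_half (negbTE even_n).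
split.
  move/(congr1 val).
  by case: (ordS_val i) => -[ci ->]; case: (ord_pred_val i) => -[ci' ->]; lia.
case: (ordS_val i) => -[ci ->]; case: (ord_pred_val i) => -[ci' ->].
all: case: (leqP i j) => cij; case: (leqP (absd i j).*2 n) => side.
all: by cdist_closed; lia.
Qed.

(* For even n no two vertices resolve: otherwise step away from the cycle
   position of the second landmark (compensating the height), or, in the
   antipodal case, take the two neighbours of the first landmark's position. *)
Lemma two_vertices_unresolved (x y : nat * 'I_n) : ~~ odd n ->
  exists u v, u <> v /\ gdist u x = gdist v x /\ gdist u y = gdist v y.
Proof.
case: x y => [a i] [b j] even_n.
case: (ltngtP (cdist n i j) n./2) => [near|far|anti].
- have [p [p_i p_j]] := cycle_step_away even_n near.
  exists ((maxn a b).+1, i), (maxn a b, p); split; first by case; lia.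
  by rewrite /gdist /= cdist_refl p_i p_j; lia.
- have := cdist_le_half (ltn_ord i) (ltn_ord j).
  have En : n = n./2.*2 by rewrite -[LHS]odd_double_half (negbTE even_n).
  lia.
- have [neq same] := cycle_antipodal even_n anti.
  exists (0, ordS i), (0, ord_pred i); split; first by move=> /(congr1 snd)/neq.
  by rewrite /gdist /= cdist_ordS cdist_ord_pred same.
Qed.

End Grid.

Lemma odd_landmarks_resolving n (hn : 2 < n) : odd n ->
  resolving_set (@PinfBoxC n) [:: (0, Ordinal (lt0_3 hn)); (0, Ordinal (lthalfm1_3 hn))].
Proof.
move=> odd_n; apply/(resolving_gridE hn) => -[a i] [b j] same.
have := same _ (mem_head _ _); have := same (0, Ordinal (lthalfm1_3 hn)).
rewrite !inE eqxx orbT !gdist_landmark /= => /(_ isT) e_mid e_0.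
have En : n = n./2.*2.+1 by rewrite -[LHS]odd_double_half odd_n add1n.
rewrite (_ : (n - 1) %/ 2 = n./2) in e_mid; last by lia.
have [-> ij] := odd_profile_inj En (ltn_ord i) (ltn_ord j) e_0 e_mid.
by rewrite (val_inj ij).
Qed.

Lemma even_landmarks_resolving n (hn : 2 < n) : ~~ odd n ->
  resolving_set (@PinfBoxC n)
    [:: (0, Ordinal (lt0_3 hn)); (0, Ordinal (lthalf_3 hn)); (0, Ordinal (lt1_3 hn))].
Proof.
move=> even_n; apply/(resolving_gridE hn) => -[a i] [b j] same.
have := same _ (mem_head _ _); have := same (0, Ordinal (lthalf_3 hn)).
have := same (0, Ordinal (lt1_3 hn)).
rewrite !inE !eqxx !orbT !gdist_landmark /= => /(_ isT) e_1 /(_ isT) e_mid e_0.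
have En : n = n./2.*2 by rewrite -[LHS]odd_double_half (negbTE even_n).
rewrite (_ : n %/ 2 = n./2) in e_mid; last by lia.
have [|-> ij] := even_profile_inj En _ (ltn_ord i) (ltn_ord j) e_0 e_mid e_1; first by lia.
by rewrite (val_inj ij).
Qed.

Lemma grid_resolving_size_gt1 n (hn : 2 < n) S :
  resolving_set (@PinfBoxC n) S -> 1 < size S.
Proof.
apply: (resolving_size_gt (0, Ordinal (lt0_3 hn))) => -[|x [|y T]] //= _.
move/(resolving_gridE hn) => res.
have [u [v [neq same]]] := single_vertex_unresolved hn x.
by apply: neq; apply: res => z; rewrite inE => /eqP ->.
Qed.

Lemma even_grid_resolving_size_gt2 n (hn : 2 < n) S : ~~ odd n ->
  resolving_set (@PinfBoxC n) S -> 2 < size S.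
Proof.
move=> even_n; apply: (resolving_size_gt (0, Ordinal (lt0_3 hn))) => -[|x [|y [|z T]]] //= _.
move/(resolving_gridE hn) => res.
have [u [v [neq [same_x same_y]]]] := two_vertices_unresolved hn x y even_n.
by apply: neq; apply: res => w; rewrite !inE => /orP [] /eqP ->.
Qed.

Theorem proposition6 (n : nat) (hn : 2 < n) :
  (odd n ->
     metric_dim_eq (@PinfBoxC n) 2 /\
     metric_basis (@PinfBoxC n)
       [:: (0, Ordinal (lt0_3 hn)); (0, Ordinal (lthalfm1_3 hn))]) /\
  (~~ odd n ->
     metric_dim_eq (@PinfBoxC n) 3 /\
     metric_basis (@PinfBoxC n)
       [:: (0, Ordinal (lt0_3 hn)); (0, Ordinal (lthalf_3 hn));
           (0, Ordinal (lt1_3 hn))]).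
Proof.
split=> [odd_n|even_n]; apply: metric_basis_intro => //.
- rewrite /= inE andbT; apply/negP => /eqP /(congr1 (val \o snd)) /=; lia.
- exact: odd_landmarks_resolving.
- exact: grid_resolving_size_gt1.
- rewrite /= !inE andbT negb_or -!andbA.
  by apply/and3P; split; apply/negP => /eqP /(congr1 (val \o snd)) /=; lia.
- exact: even_landmarks_resolving.
- by move=> S; apply: even_grid_resolving_size_gt2.
Qed.
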